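(* Let $K$ be the complete graph on $X \cup Y$, where $X$ and $Y$ are disjoint sets of size $n$. Let $F$ be a subgraph of $K$ containing no triangle that meets both $X$ and $Y$. Then $|F|\leq n^2$.
   Context: $|F|$ denotes the number of edges of $F$. *)

From mathcomp Require Import all_boot.
Set Implicit Arguments. Unset Strict Implicit. Unset Printing Implicit Defensive.

(* Vertex set X ∪ Y of K, with X = copy 'inl' of 'I_n and Y = copy 'inr' of
   'I_n; these are disjoint sets of size n. *)
Definition vtx (n : nat) : finType := ('I_n + 'I_n)%type.

Definition inX n (v : vtx n) : bool := if v is inl _ then true else false.
Definition inY n (v : vtx n) : bool := if v is inr _ then true else false.

Definition subgraph_of_K n (F : {set {set vtx n}}) : Prop :=
  forall e, e \in F -> #|e| = 2.

Definition triangle n (F : {set {set vtx n}}) (a b c : vtx n) : Prop :=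
  [/\ a != b, b != c, a != c &
      [/\ [set a; b] \in F, [set b; c] \in F & [set a; c] \in F]].

Definition meets_X_and_Y n (a b c : vtx n) : Prop :=
  [|| inX a, inX b | inX c] /\ [|| inY a, inY b | inY c].

(* Pick x in X and y in Y with no common neighbour: if some
   edge joins X to Y take its ends (a common neighbour would close a triangle
   meeting X and Y), otherwise any x and y will do (a common neighbour would
   give an edge from X to Y).  Every z other than x, y is then joined to at
   most one of x and y, so deleting x and y loses at most 2(n-1) + 1 = 2n - 1
   edges, and (n-1)^2 + 2n - 1 = n^2. *)
From mathcomp Require Import all_boot.
From mathcomp Require Import zify.
Set Implicit Arguments. Unset Strict Implicit.

Definition induced (T : finType) (F : {set {set T}}) (S : {set T}) :=
  [set e in F | e \subset S].

Section RemoveNonAdjacentPair.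

Variables (T : finType) (F : {set {set T}}).
Hypothesis edge_card2 : forall e, e \in F -> #|e| = 2.

Lemma induced_set0 : induced F set0 = set0.
Proof.
apply/setP => e; rewrite !inE subset0 andbC.
by case: eqP => // ->; apply/negP => /edge_card2; rewrite cards0.
Qed.

Variables (S : {set T}) (x y : T).
Hypothesis no_common_nbr : forall z, z \in S -> z != x -> z != y ->
  [set x; z] \in F -> [set y; z] \in F -> False.

Let S' := S :\ x :\ y.
(* No common neighbour: every edge from z to {x, y} is [to_edge z]. *)
Let to_edge z := if [set x; z] \in F then [set x; z] else [set y; z].

Lemma in_setD2 z : z \in S -> z != x -> z != y -> z \in S'.
Proof. by move=> zS zx zy; rewrite !in_setD1 zS zx zy. Qed.

Lemma edge_at_pair u b : (u == x) || (u == y) -> b \in S -> u != b ->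
  [set u; b] \in F -> [set u; b] \in [set [set x; y]] :|: to_edge @: S'.
Proof.
move=> /orP[/eqP-> | /eqP->] bS ub ubF.
- have [->|bny] := eqVneq b y; first by rewrite !inE eqxx.
  apply/setUP; right; apply/imsetP; exists b.
    by apply: in_setD2; rewrite // eq_sym.
  by rewrite /to_edge ubF.
- have [->|bnx] := eqVneq b x; first by rewrite setUC !inE eqxx.
  apply/setUP; right; apply/imsetP; exists b.
    by apply: in_setD2; rewrite // eq_sym.
  rewrite /to_edge; case: ifP => // xbF.
  by case: (no_common_nbr bS bnx); rewrite 1?eq_sym.
Qed.

Lemma induced_subset_remove2 :
  induced F S \subset induced F S' :|: ([set [set x; y]] :|: to_edge @: S').
Proof.
apply/subsetP => e; rewrite inE => /andP[eF eS].
have /eqP/cards2P[a [b [ab def_e]]] := edge_card2 eF; subst e.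
have aS : a \in S by apply: (subsetP eS); rewrite !inE eqxx.
have bS : b \in S by apply: (subsetP eS); rewrite !inE eqxx orbT.
apply/setUP; case ha: ((a == x) || (a == y)).
  by right; apply: edge_at_pair.
case hb: ((b == x) || (b == y)).
  by right; rewrite setUC; apply: edge_at_pair; rewrite // 1?setUC // eq_sym.
move/negbT: ha; move/negbT: hb; rewrite !negb_or => /andP[bx b_y] /andP[ax ay].
left; rewrite inE eF; apply/subsetP => v.
by rewrite !inE => /orP[] /eqP->; rewrite ?ax ?ay ?bx ?b_y.
Qed.

Lemma card_induced_remove2 :
  #|induced F S| <= #|induced F S'| + #|S'| + 1.
Proof.
apply: leq_trans (subset_leq_card induced_subset_remove2) _.
rewrite -addnA; apply: leq_trans (leq_card_setU _ _) _; rewrite leq_add2l.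
apply: leq_trans (leq_card_setU _ _) _.
by rewrite cards1 addnC leq_add2r leq_imset_card.
Qed.

End RemoveNonAdjacentPair.

Definition partX n (S : {set vtx n}) := [set v in S | inX v].
Definition partY n (S : {set vtx n}) := [set v in S | inY v].

Lemma card_partXY n (S : {set vtx n}) : #|S| = #|partX S| + #|partY S|.
Proof.
rewrite -(cardsID [set v | inX v] S); congr (_ + _); apply: eq_card => v;
  by rewrite !inE; case: v => ? /=; rewrite ?andbT ?andbF.
Qed.

Lemma partX_remove2 n (S : {set vtx n}) x y : inY y ->
  partX (S :\ x :\ y) = partX S :\ x.
Proof.
move=> yY; apply/setP => v; rewrite !inE -!andbA; case: (eqVneq v y) => //= ->.
by case: y yY => // i _; rewrite !andbF.
Qed.

Lemma partY_remove2 n (S : {set vtx n}) x y : inX x ->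
  partY (S :\ x :\ y) = partY S :\ y.
Proof.
move=> xX; apply/setP => v; rewrite !inE -!andbA; case: (eqVneq v x) => //= ->.
by case: x xX => // i _; rewrite !andbF.
Qed.

Lemma card_partX_setT n : #|partX [set: vtx n]| = n.
Proof.
have -> : partX [set: vtx n] = inl @: [set: 'I_n].
  apply/setP => -[i|i]; rewrite !inE /=; first by rewrite imset_f.
  by apply/esym/negbTE/imsetP => -[].
by rewrite card_imset ?cardsT ?card_ord // => i j [].
Qed.

Lemma card_partY_setT n : #|partY [set: vtx n]| = n.
Proof.
have -> : partY [set: vtx n] = inr @: [set: 'I_n].
  apply/setP => -[i|i]; rewrite !inE /=; last by rewrite imset_f.
  by apply/esym/negbTE/imsetP => -[].
by rewrite card_imset ?cardsT ?card_ord // => i j [].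
Qed.

Section MixedTriangleFree.

Variables (n : nat) (F : {set {set vtx n}}).
Hypothesis F_sub_K : subgraph_of_K F.
Hypothesis no_mixed_triangle :
  forall a b c : vtx n, triangle F a b c -> ~ meets_X_and_Y a b c.

Lemma neq_XY (x y : vtx n) : inX x -> inY y -> x != y.
Proof. by case: x => // i _; case: y. Qed.

Lemma exists_XY_pair_no_common_nbr (S : {set vtx n}) :
  partX S != set0 -> partY S != set0 ->
  exists x y, [/\ x \in S, y \in S, inX x, inY y &
    forall z, z \in S -> z != x -> z != y ->
      [set x; z] \in F -> [set y; z] \in F -> False].
Proof.
move=> /set0Pn[x0 +] /set0Pn[y0]; rewrite !inE => /andP[x0S x0X] /andP[y0S y0Y].
pose XY_edge (p : vtx n * vtx n) :=
  [&& p.1 \in S, p.2 \in S, inX p.1, inY p.2 & [set p.1; p.2] \in F].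
case: (pickP XY_edge) => [[x y] /and5P[/= xS yS xX yY xyF] | noXY].
  exists x, y; split=> // z _ zx zy xzF yzF.
  have tri : triangle F x y z.
    by split; [exact: neq_XY | rewrite eq_sym.. | split].
  by apply: (no_mixed_triangle tri); split; rewrite ?xX ?yY ?orbT.
exists x0, y0; split=> // z zS _ _ xzF yzF.
case zX: (inX z).
  by have := noXY (z, y0); rewrite /XY_edge /= zS y0S zX y0Y setUC yzF.
have zY : inY z by case: z zX {zS xzF yzF}.
by have := noXY (x0, z); rewrite /XY_edge /= x0S zS x0X zY xzF.
Qed.

Lemma card_induced_balanced k (S : {set vtx n}) :
  #|partX S| = k -> #|partY S| = k -> #|induced F S| <= k ^ 2.
Proof.
elim: k S => [|k IH] S cardX cardY.
  have S0 : S = set0 by apply/cards0_eq; rewrite card_partXY cardX cardY.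
  by rewrite S0 induced_set0 ?cards0.
have nonempty_part (A : {set vtx n}) : #|A| = k.+1 -> A != set0.
  by move=> cardA; rewrite -card_gt0 cardA.
have [x [y [xS yS xX yY no_common]]] := exists_XY_pair_no_common_nbr
  (nonempty_part _ cardX) (nonempty_part _ cardY).
have cardX' : #|partX (S :\ x :\ y)| = k.
  by move: cardX; rewrite partX_remove2 // (cardsD1 x) !inE xS xX; lia.
have cardY' : #|partY (S :\ x :\ y)| = k.
  by move: cardY; rewrite partY_remove2 // (cardsD1 y) !inE yS yY; lia.
have := card_induced_remove2 F_sub_K no_common.
by rewrite card_partXY cardX' cardY'; have := IH _ cardX' cardY'; lia.
Qed.

End MixedTriangleFree.

Theorem mainTheorem3 (n : nat) (F : {set {set vtx n}}) :
  subgraph_of_K F ->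
  (forall a b c : vtx n, triangle F a b c -> ~ meets_X_and_Y a b c) ->
  #|F| <= n ^ 2.
Proof.
move=> F_sub_K no_mixed_triangle.
have -> : F = induced F setT by apply/setP => e; rewrite !inE subsetT andbT.
exact: card_induced_balanced (card_partX_setT n) (card_partY_setT n).
Qed.
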